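(* Let $\pi\in S_n$ be a cycle of length $l\ge2$ (with the remaining $n-l$ points fixed). Then $$\det(S_\pi)=\begin{cases}-1,& l=2,\\ 2,& l \text{ odd},\\ -4,& l=4k+2\text{ for some integer }k\ge1,\\ 0,& l=4k\text{ for some integer }k\ge1.\end{cases}$$
   Context: For $\theta\in S_n$, $S_\theta$ is the $n\times n$ symmetric $0/1$ matrix with $(S_\theta)_{ij}=1$ if $\theta(i)=j$ or $\theta^{-1}(i)=j$, and $0$ otherwise. *)

From HB Require Import structures.
From mathcomp Require Import all_boot all_order all_algebra all_fingroup.
Set Implicit Arguments. Unset Strict Implicit. Unset Printing Implicit Defensive.
Import GRing.Theory Num.Theory.

Definition S_mat (n : nat) (theta : 'S_n) : 'M[int]_n :=
  \matrix_(i, j) Posz (((theta i == j) || ((theta^-1)%g i == j)) : nat).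

Definition is_cycle_of_length (n : nat) (pi : 'S_n) (l : nat) : Prop :=
  exists x : 'I_n, #|porbit pi x| = l /\
    (forall y : 'I_n, y \notin porbit pi x -> pi y = y).

From HB Require Import structures.
From mathcomp Require Import all_boot all_order all_algebra all_fingroup.
From mathcomp Require Import all_field zify ring.
Import GRing.Theory Num.Theory.
Local Open Scope ring_scope.
Set Implicit Arguments. Unset Strict Implicit.

(* Let C be the l x l matrix of the cyclic shift k |-> k+1 mod l.
   1. Spectral part: the characteristic polynomial of C is X^l - 1 (C is the
      companion matrix of X^l - 1), hence det (C + b) = (-1)^l ((-b)^l - 1) for
      every scalar b.  Since C C^T = 1, over a field containing i we get
        det C * det (C + C^T) = det (C^2 + 1) = det (C + i) det (C - i)
                              = ((-i)^l - 1) (i^l - 1),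
      and det C = -(-1)^l; evaluating i^l gives det (C + C^T) = 2, -4, 0 for
      l odd, l = 2 mod 4 and l = 0 mod 4 respectively.
   2. Combinatorial part: if pi is an l-cycle with orbit O, relabelling the
      points as (the orbit of x in the order x, pi x, pi^2 x, ...) followed by
      the fixed points conjugates S_pi by a permutation matrix into the block
      matrix diag (A, 1), where A = C + C^T for l >= 3 and A = C for l = 2.
   The theorem follows by combining the two parts. *)

Lemma char_poly_castmx (R : comNzRingType) m k (e : m = k) (A : 'M[R]_m) :
  char_poly (castmx (e, e) A) = char_poly A.
Proof. by case: k / e; rewrite castmx_id. Qed.

Lemma det_castmx (R : comNzRingType) m k (e : m = k) (A : 'M[R]_m) :
  \det (castmx (e, e) A) = \det A.
Proof. by case: k / e; rewrite castmx_id. Qed.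

Lemma horner_char_poly (R : comNzRingType) n (A : 'M[R]_n) (a : R) :
  (char_poly A).[a] = \det (a%:M - A).
Proof.
rewrite -horner_evalE -det_map_mx; congr (\det _); apply/matrixP=> i j.
by rewrite !mxE rmorphB rmorphMn /= horner_evalE hornerX horner_evalE hornerC.
Qed.

Lemma det_conj_perm (R : comNzRingType) n (A : 'M[R]_n) (s : 'S_n) :
  \det (\matrix_(i, j) A (s i) (s j)) = \det A.
Proof.
have -> : \matrix_(i, j) A (s i) (s j) = row_perm s (col_perm s A).
  by apply/matrixP => i j; rewrite !mxE.
rewrite row_permE col_permE !det_mulmx !det_perm odd_permV mulrCA mulrA.
by rewrite -mulrA -signr_addb addbb mulr1.
Qed.

Definition cyclic_shift l : 'S_l := perm (@ordS_inj l).

Definition shift_mx (R : nzRingType) l : 'M[R]_l := perm_mx (cyclic_shift l).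

Section ShiftMatrix.
Variables (R : comNzRingType) (l : nat).
Hypothesis l_gt0 : (0 < l)%N.
Local Notation C := (shift_mx R l).

(* C is the companion matrix of X^l - 1. *)
Lemma char_poly_shift : char_poly C = 'X^l - 1.
Proof.
have sz : size ('X^l - 1 : {poly R}) = l.+1 by rewrite -polyC1 size_XnsubC.
have e : (size ('X^l - 1 : {poly R})).-1 = l by rewrite sz.
rewrite -[RHS](companionmxK (monicXnsubC 1 l_gt0)) -(char_poly_castmx e).
congr char_poly; apply/matrixP => i j.
rewrite castmxE !mxE /= permE /= sz /=.
have [il|il] := eqVneq (i : nat) l.-1.
  rewrite coefB coefXn coefC -val_eqE /= (ltn_eqF (ltn_ord j)).
  have -> : i.+1 = l by rewrite il prednK.
  by rewrite modnn eq_sym; case: (j == 0 :> nat); rewrite ?subr0 ?oppr0 ?sub0r ?opprK.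
have -> : (ordS i == j) = (i.+1 %% l == j)%N by [].
by rewrite modn_small //; move: (ltn_ord i) il => /= ? /eqP; lia.
Qed.

(* det (C + b) is (-1)^l times the characteristic polynomial at -b. *)
Lemma det_shift_add_scalar (b : R) :
  \det (C + b%:M) = (-1) ^+ l * ((- b) ^+ l - 1).
Proof.
have -> : C + b%:M = - ((- b)%:M - C) by rewrite opprB raddfN /= opprK.
by rewrite -scaleN1r detZ -horner_char_poly char_poly_shift !hornerE.
Qed.

Lemma det_shift : \det C = - (-1) ^+ l.
Proof.
have := det_shift_add_scalar 0; rewrite oppr0 expr0n (gtn_eqF l_gt0) sub0r.
by rewrite mulrN1 => <-; rewrite raddf0 addr0.
Qed.

Lemma shift_mx_orthogonal : C *m C^T = 1%:M.
Proof. by rewrite tr_perm_mx -perm_mxM mulgV perm_mx1. Qed.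
End ShiftMatrix.

(* Over a field with a square root i of -1, C^2 + 1 = (C + i)(C - i). *)
Lemma det_shift_sym_factor (F : numClosedFieldType) l : (0 < l)%N ->
  - (-1) ^+ l * \det (shift_mx F l + (shift_mx F l)^T) =
  ((- 'i) ^+ l - 1) * ('i ^+ l - 1).
Proof.
move=> l_gt0; set C := shift_mx F l.
rewrite -det_shift // -det_mulmx mulmxDr shift_mx_orthogonal.
have -> : C *m C + 1%:M = (C + 'i%:M) *m (C + (- 'i)%:M).
  rewrite mulmxDr !mulmxDl -!scalar_mxM !mul_mx_scalar !mul_scalar_mx.
  by rewrite mulrN -expr2 sqrCi opprK scaleNr addrA addrK.
rewrite det_mulmx !det_shift_add_scalar // opprK mulrACA -exprMn mulrNN mulr1.
by rewrite expr1n mul1r.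
Qed.

Lemma det_shift_sym_int l : (0 < l)%N ->
  - (-1) ^+ l * (\det (shift_mx int l + (shift_mx int l)^T))%:~R =
  ((- 'i) ^+ l - 1) * ('i ^+ l - 1) :> algC.
Proof.
move=> l_gt0; rewrite -det_shift_sym_factor // -det_map_mx /=; congr (_ * \det _).
by apply/matrixP => i j; rewrite !mxE rmorphD /= !rmorph_nat.
Qed.

Lemma i_exp4 : ('i : algC) ^+ 4 = 1.
Proof. by rewrite (exprM _ 2 2) sqrCi expr2 mulrNN mulr1. Qed.

Lemma det_shift_sym_odd l : odd l ->
  \det (shift_mx int l + (shift_mx int l)^T) = 2.
Proof.
move=> l_odd; have l_gt0 : (0 < l)%N by case: l l_odd.
apply: (@intr_inj algC); have := det_shift_sym_int l_gt0.
rewrite -signr_odd l_odd expr1 opprK mul1r exprNn -signr_odd l_odd expr1 mulN1r => ->.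
have i_sq : ('i : algC) ^+ l * 'i ^+ l = -1.
  by rewrite -exprD addnn -mul2n exprM sqrCi -signr_odd l_odd expr1.
set u := 'i ^+ l in i_sq *.
have -> : (- u - 1) * (u - 1) = 1 - u * u by ring.
by rewrite i_sq opprK.
Qed.

Lemma det_shift_sym_4k2 l k : l = (4 * k + 2)%N ->
  \det (shift_mx int l + (shift_mx int l)^T) = -4.
Proof.
move=> el; have l_gt0 : (0 < l)%N by rewrite el addn2.
have l_even : odd l = false by rewrite el addn2 /= oddM.
apply: (@intr_inj algC); have := det_shift_sym_int l_gt0.
rewrite -signr_odd l_even expr0 mulN1r exprNn -signr_odd l_even expr0 mul1r.
have -> : ('i : algC) ^+ l = -1 by rewrite el exprD exprM i_exp4 expr1n mul1r sqrCi.
by move=> h; rewrite -[LHS]opprK h; ring.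
Qed.

Lemma det_shift_sym_4k l k : (1 <= k)%N -> l = (4 * k)%N ->
  \det (shift_mx int l + (shift_mx int l)^T) = 0.
Proof.
move=> k_gt0 el; have l_gt0 : (0 < l)%N by rewrite el muln_gt0.
have l_even : odd l = false by rewrite el oddM.
apply: (@intr_inj algC); have := det_shift_sym_int l_gt0.
rewrite -signr_odd l_even expr0 mulN1r exprNn -signr_odd l_even expr0 mul1r.
have -> : ('i : algC) ^+ l = 1 by rewrite el exprM i_exp4 expr1n.
by rewrite subrr mulr0 => /eqP; rewrite oppr_eq0 => /eqP ->; rewrite rmorph0.
Qed.

Lemma iter_mod (T : Type) (f : T -> T) x l :
  iter l f x = x -> forall k, iter k f x = iter (k %% l) f x.
Proof.
move=> per k; have iter_mul q : iter (q * l) f x = x.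
  by elim: q => [|q IH] //=; rewrite mulSn iterD IH per.
by rewrite {1}(divn_eq k l) addnC iterD iter_mul.
Qed.

(* The relabelling of the points of an l-cycle pi with orbit O = porbit pi x:
   first x, pi x, ..., pi^(l-1) x, then the m = n - l fixed points. *)
Section CycleRelabelling.
Variables (n l : nat) (pi : 'S_n) (x : 'I_n).
Hypothesis orbit_size : #|porbit pi x| = l.
Hypothesis fixed_outside : forall y : 'I_n, y \notin porbit pi x -> pi y = y.

Let O := porbit pi x.
Let m := #|~: O|.

Lemma cycle_length_gt0 : (0 < l)%N.
Proof. by rewrite -orbit_size lt0n card_porbit_neq0. Qed.

Lemma iter_in_orbit k : iter k pi x \in O.
Proof. by rewrite -permX mem_porbit. Qed.

Lemma iter_orbit_eq a b : (iter a pi x == iter b pi x) = (a %% l == b %% l)%N.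
Proof.
have per : iter l pi x = x by rewrite -orbit_size iter_porbit.
have lp := cycle_length_gt0.
rewrite (iter_mod per a) (iter_mod per b).
rewrite -(nth_traject pi (ltn_pmod a lp)) -(nth_traject pi (ltn_pmod b lp)).
by rewrite nth_uniq ?size_traject ?ltn_pmod // -orbit_size uniq_traject_porbit.
Qed.

Lemma not_fixed_in_orbit (b : 'I_m) k : (iter k pi x == enum_val b) = false.
Proof.
apply/negbTE/eqP => h; have := enum_valP b.
by rewrite inE -h iter_in_orbit.
Qed.

Lemma pi_fixed (b : 'I_m) : pi (enum_val b) = enum_val b.
Proof. by apply: fixed_outside; have := enum_valP b; rewrite inE. Qed.

Definition relabel (k : 'I_(l + m)) : 'I_n :=
  match split k with inl a => iter a pi x | inr b => enum_val b end.

Lemma relabel_lshift a : relabel (lshift m a) = iter a pi x.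
Proof. by rewrite /relabel (unsplitK (inl a : 'I_l + 'I_m)). Qed.

Lemma relabel_rshift b : relabel (rshift l b) = enum_val b.
Proof. by rewrite /relabel (unsplitK (inr b : 'I_l + 'I_m)). Qed.

Lemma relabel_inj : injective relabel.
Proof.
move=> i j; rewrite -[i]splitK -[j]splitK /relabel !unsplitK.
case: (split i) => [a|b]; case: (split j) => [a'|b'] /= h.
- congr (unsplit (inl _)); apply/val_inj/eqP.
  by move: h => /eqP; rewrite iter_orbit_eq !modn_small.
- by move/eqP: h; rewrite not_fixed_in_orbit.
- by move/esym/eqP: h; rewrite not_fixed_in_orbit.
- by rewrite (enum_val_inj h).
Qed.

Lemma relabel_size : (l + m)%N = n.
Proof. by rewrite /m -orbit_size cardsC card_ord. Qed.

Definition relabel_perm : 'S_n :=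
  perm (inj_comp relabel_inj (@cast_ord_inj _ _ (esym relabel_size))).

Definition orbit_block : 'M[int]_l :=
  \matrix_(a, b) (S_mat pi) (iter a pi x) (iter b pi x).

Lemma S_mat_relabel :
  \matrix_(i, j) (S_mat pi) (relabel i) (relabel j) = block_mx orbit_block 0 0 1%:M.
Proof.
apply/matrixP => i j; rewrite -[i]splitK -[j]splitK.
case: (split i) => [a|b]; case: (split j) => [a'|b'] /=;
  rewrite ?block_mxEul ?block_mxEur ?block_mxEdl ?block_mxEdr !mxE
    ?relabel_lshift ?relabel_rshift // (canF_eq (permKV pi)).
- by rewrite -iterS pi_fixed !not_fixed_in_orbit.
- by rewrite pi_fixed -iterS eq_sym not_fixed_in_orbit eq_sym not_fixed_in_orbit.
- by rewrite !pi_fixed (inj_eq enum_val_inj) orbb natz.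
Qed.

Lemma det_S_mat_orbit_block : \det (S_mat pi) = \det orbit_block.
Proof.
rewrite -(det_conj_perm (S_mat pi) relabel_perm) -(det_castmx (esym relabel_size)).
rewrite -[\det orbit_block]mulr1 -(det1 _ m) -(det_ublock _ 0) -S_mat_relabel.
congr (\det _); apply/matrixP => i j.
by rewrite castmxE !mxE /relabel_perm !permE /= !cast_ord_comp !cast_ord_id.
Qed.

Lemma orbit_blockE (a b : 'I_l) :
  orbit_block a b = Posz (((ordS a == b) || (ordS b == a)) : nat).
Proof.
rewrite !mxE (canF_eq (permKV pi)) -!iterS !iter_orbit_eq.
by rewrite !(modn_small (ltn_ord a)) !(modn_small (ltn_ord b)) [X in _ || X]eq_sym.
Qed.

(* For l = 2 both neighbours coincide, for l >= 3 they are distinct. *)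
Lemma orbit_block_2 : l = 2%N -> orbit_block = shift_mx int l.
Proof.
move=> l2; apply/matrixP => a b; rewrite orbit_blockE !mxE permE.
have -> : (ordS b == a) = (ordS a == b).
  apply/eqP/eqP => /(congr1 val) /= h; apply/val_inj => /=; move: h;
  move: (ltn_ord a) (ltn_ord b); move: (a : nat) (b : nat) => a' b';
  by rewrite l2; lia.
by rewrite orbb natz.
Qed.

Lemma orbit_block_ge3 : (3 <= l)%N ->
  orbit_block = shift_mx int l + (shift_mx int l)^T.
Proof.
move=> l3; apply/matrixP => a b; rewrite orbit_blockE !mxE !permE.
suff : ~~ ((ordS a == b) && (ordS b == a)).
  by case: (ordS a == b); case: (ordS b == a).
apply/negP => /andP [/eqP /(congr1 val) /= h1 /eqP /(congr1 val) /= h2].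
move: h1 h2 (ltn_ord a) (ltn_ord b).
have modS c : (c < l)%N -> (c.+1 %% l = if c.+1 == l then 0 else c.+1)%N.
  move=> cl; case: eqP => [->|ne]; first by rewrite modnn.
  by rewrite modn_small // ltn_neqAle cl andbT; apply/eqP.
by rewrite !modS //; case: eqP; case: eqP; lia.
Qed.
End CycleRelabelling.

Theorem mainTheorem12 (n l : nat) (pi : 'S_n)
  (hl : (2 <= l)%N) (hcyc : is_cycle_of_length pi l) :
  (l = 2%N -> \det (S_mat pi) = -1) /\
  (odd l -> \det (S_mat pi) = 2) /\
  (forall k : nat, (1 <= k)%N -> l = (4 * k + 2)%N -> \det (S_mat pi) = -4) /\
  (forall k : nat, (1 <= k)%N -> l = (4 * k)%N -> \det (S_mat pi) = 0).
Proof.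
case: hcyc => x [orbit_size fixed_outside].
rewrite (det_S_mat_orbit_block orbit_size fixed_outside).
split; [|split; [|split]].
- move=> l2; rewrite (orbit_block_2 orbit_size l2) det_shift; last by rewrite l2.
  by rewrite l2 expr2 mulrNN mulr1.
- move=> l_odd; have l3 : (3 <= l)%N.
    by rewrite ltn_neqAle hl andbT; apply: contraTneq l_odd => <-.
  by rewrite (orbit_block_ge3 orbit_size l3) det_shift_sym_odd.
- move=> k k_gt0 el; have l3 : (3 <= l)%N by rewrite el; lia.
  by rewrite (orbit_block_ge3 orbit_size l3) (det_shift_sym_4k2 el).
- move=> k k_gt0 el; have l3 : (3 <= l)%N by rewrite el; lia.
  by rewrite (orbit_block_ge3 orbit_size l3) (det_shift_sym_4k k_gt0 el).
Qed.
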